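(* Let $L$ spin-orbitals be indexed by $\{1,\dots,L\}$ and $1\le N_{\mathrm{occ}}<L$; an o-operator is $\hat a^\dagger_p$ or $\hat a_p$ with $p\le N_{\mathrm{occ}}$, a v-operator one with $p>N_{\mathrm{occ}}$, and an arbitrary operator is a creation or annihilation operator whose spin-orbital is not specified to be occupied or virtual (neither an o- nor a v-operator). Let $\hat C$ be a chain of $n$ excitation operators $\hat E^a_i=\hat a^\dagger_a\hat a_i$ and $n$ deexcitation operators $\hat D^i_a=\hat a^\dagger_i\hat a_a$ ($i\le N_{\mathrm{occ}}<a$), and let $S=s_1\cdots s_{2n}$ be the word obtained by replacing each deexcitation operator by ''('' and each excitation operator by '')''. Let $N\ge1$ and $K\in\{0,\dots,2n\}$, and let $\hat C^N_K$ be the chain obtained from $\hat C$ by inserting, immediately after its $K$-th (de)excitation operator (read from left to right), $N$ arbitrary creation operators followed by $N$ arbitrary annihilation operators. For any chain $\hat X$ of elementary operators (expanding each (de)excitation operator into its two factors), let $\mathcal W(\hat X)$ be the number of partitions of its elementary operators into pairs such that every pair $(x,y)$, with $x$ to the left of $y$, satisfies either: $x$ is a creation operator, $y$ is an annihilation operator, and neither is a v-operator; or: $x$ is an annihilation operator, $y$ is a creation operator, and neither is an o-operator. Then: (i) if $S$ is not a Dyck word, $\mathcal W(\hat C^N_K)=0$; (ii) if $S$ is a Dyck word, then $$\mathcal W(\hat C^N_K)=N!\,\mathcal M^N_{d_K}\,\mathcal W(\hat C),\qquad \mathcal M^N_{d_K}=\sum_{\ell=0}^{\min(N,d_K)}\binom{N}{\ell}^2\binom{d_K+N-\ell}{N},$$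 where $d_K$ is the number of ''('' minus the number of '')'' among $s_1,\dots,s_K$ (so $d_0=0$).
   Context: A Dyck word is a finite word over $\{(,)\}$ with as many opening as closing brackets, every prefix of which contains at least as many opening as closing brackets. Motivation: partitions into pairs are full contractions (Wick's theorem) relative to the Fermi vacuum (Slater determinant with spin-orbitals $1,\dots,N_{\mathrm{occ}}$ occupied), and the allowed pairs are exactly those whose contraction value, given by $\langle \hat a^\dagger_r\hat a_s\rangle=\delta_{rs}n_rn_s$ and $\langle \hat a_s\hat a^\dagger_r\rangle=\delta_{rs}(1-n_r)(1-n_s)$ with $n_p$ the occupation number ($1$ for o-, $0$ for v-operators, undetermined for arbitrary operators) and zero for contractions of two creation or two annihilation operators, is not forced to vanish; $\mathcal W$ counts these ''well'' full contractions. The inserted operators are regarded as distinct objects. *)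

From mathcomp Require Import all_boot.
Set Implicit Arguments. Unset Strict Implicit. Unset Printing Implicit Defensive.

Inductive opclass := OccOp | VirtOp | ArbOp.

Definition opclass_eqb (x y : opclass) : bool :=
  match x, y with
  | OccOp, OccOp | VirtOp, VirtOp | ArbOp, ArbOp => true
  | _, _ => false end.

Record elop := Elop { is_cre : bool; ocls : opclass }.

Definition orb_class (Nocc p : nat) : opclass :=
  if p <= Nocc then OccOp else VirtOp.

(* A (de)excitation operator: (is_excitation, i, a) with i occupied, a virtual.
   Excitation E^a_i = a^+_a a_i ; deexcitation D^i_a = a^+_i a_a. *)
Definition xop := (bool * nat * nat)%type.

Definition xop_valid (L Nocc : nat) (x : xop) : bool :=
  [&& 1 <= x.1.2, x.1.2 <= Nocc, Nocc < x.2 & x.2 <= L].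

Definition expand_xop (Nocc : nat) (x : xop) : seq elop :=
  let: (exc, i, a) := x in
  if exc then [:: Elop true (orb_class Nocc a); Elop false (orb_class Nocc i)]
  else [:: Elop true (orb_class Nocc i); Elop false (orb_class Nocc a)].

Definition expand_chain (Nocc : nat) (C : seq xop) : seq elop :=
  flatten (map (expand_xop Nocc) C).

(* The word S: deexcitation -> "(" (true), excitation -> ")" (false). *)
Definition word_of (C : seq xop) : seq bool := map (fun x => ~~ x.1.1) C.

Definition dyck (s : seq bool) : bool :=
  [forall k : 'I_(size s).+1,
     count negb (take k s) <= count id (take k s)]
  && (count negb s == count id s).

(* d_K = #"(" - #")" among s_1..s_K (nonnegative for a Dyck word). *)
Definition depth (s : seq bool) (K : nat) : nat :=
  count id (take K s) - count negb (take K s).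

Definition insert_chain (Nocc : nat) (C : seq xop) (N K : nat) : seq elop :=
  expand_chain Nocc (take K C)
  ++ nseq N (Elop true ArbOp) ++ nseq N (Elop false ArbOp)
  ++ expand_chain Nocc (drop K C).

Definition good_pair (x y : elop) : bool :=
  (is_cre x && ~~ is_cre y && ~~ opclass_eqb (ocls x) VirtOp
     && ~~ opclass_eqb (ocls y) VirtOp)
  || (~~ is_cre x && is_cre y && ~~ opclass_eqb (ocls x) OccOp
     && ~~ opclass_eqb (ocls y) OccOp).

(* Partitions of the positions 'I_m into pairs are encoded bijectively as
   fixed-point-free involutions of 'I_m. *)
Definition well_matching (X : seq elop) (f : {ffun 'I_(size X) -> 'I_(size X)}) : bool :=
  [forall x : 'I_(size X), (f (f x) == x) && (f x != x)]
  && [forall x : 'I_(size X), (x < f x) ==> good_pair (nth (Elop true ArbOp) X x)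
                                         (nth (Elop true ArbOp) X (f x))].

Definition W (X : seq elop) : nat :=
  #|[set f : {ffun 'I_(size X) -> 'I_(size X)} | well_matching f]|.

Definition Mcoef (N d : nat) : nat :=
  \sum_(l < (minn N d).+1) 'C(N, l) ^ 2 * 'C(d + N - l, N).

From mathcomp Require Import all_boot zify.
Set Implicit Arguments. Unset Strict Implicit. Unset Printing Implicit Defensive.

(* Scan the operators from left to right: in a well contraction each operator either
   opens a contraction, as its left partner, or closes one of the contractions still open.
   Left partners are of two kinds, a creator that is not a v-operator (opening
   <a^+_r a_s>) or an annihilator that is not an o-operator (opening <a_s a^+_r>), and
   how the scan may continue only depends on the numbers a and b of contractions of each
   kind still open.  So W is the value at (0, 0) of a transfer recursion in (a, b).
   Along an expanded (de)excitation chain a = b = d, the depth of the word read so far: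
   "(" raises d, ")" lowers it and closes one contraction of each kind in d^2 ways, and
   the chain can end in (0, 0) only if its word is a Dyck word.  Reached at depth d, the
   N inserted creators close l of the d open <a a^+> contractions and open N - l new
   <a^+ a> ones; the N annihilators must bring the state back to (d, d), so exactly
   N - l of them close <a^+ a> contractions.  Hence the factor
   sum_l C(N,l) d^_l C(N,N-l) (d+N-l)^_(N-l) = N! M^N_d. *)

Section FinsetCounting.
Variables S S' : finType.

Lemma card_in_bij (A : {set S}) (B : {set S'}) (f : S -> S') (g : S' -> S) :
  {in A, forall x, f x \in B /\ g (f x) = x} ->
  {in B, forall y, g y \in A /\ f (g y) = y} -> #|A| = #|B|.
Proof.
move=> fAB gBA; rewrite -(@card_in_imset _ _ f A); last first.
  by move=> x x' /fAB[_ gfx] /fAB[_ gfx'] fxx'; rewrite -gfx fxx' gfx'.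
congr #|pred_of_set _|; apply/setP => y; apply/imsetP/idP => [[x /fAB[fxB _] ->] // | yB].
by have [gyA fgy] := gBA y yB; exists (g y).
Qed.

Lemma card_fibers (p : pred S) (g : S -> S') (P : pred S') :
  #|[set x | p x & P (g x)]| = \sum_(u | P u) #|[set x | p x & g x == u]|.
Proof.
rewrite -sum1_card (partition_big g P) => [|x]; last by rewrite inE => /andP[].
apply: eq_bigr => u Pu; rewrite -sum1_card; apply: eq_bigl => x; rewrite !inE.
by case: eqP => [->|]; rewrite ?Pu ?andbT ?andbF.
Qed.

Definition link (i j : S) (g : {ffun S -> S}) : {ffun S -> S} :=
  [ffun y => if y == i then j else if y == j then i else g y].

Definition unlink (i j : S) (f : {ffun S -> S}) : {ffun S -> S} :=
  [ffun y => if (y == i) || (y == j) then y else f y].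

Lemma link_l i j g : link i j g i = j.
Proof. by rewrite ffunE eqxx. Qed.

Lemma link_r i j g : link i j g j = i.
Proof. by rewrite ffunE eqxx; case: eqP. Qed.

Lemma link_other i j g y : y != i -> y != j -> link i j g y = g y.
Proof. by rewrite ffunE => /negbTE -> /negbTE ->. Qed.

Lemma unlink_l i j f : unlink i j f i = i.
Proof. by rewrite ffunE eqxx. Qed.

Lemma unlink_r i j f : unlink i j f j = j.
Proof. by rewrite ffunE eqxx orbT. Qed.

Lemma unlink_other i j f y : y != i -> y != j -> unlink i j f y = f y.
Proof. by rewrite ffunE => /negbTE -> /negbTE ->. Qed.

Lemma link_unlink i j (f : {ffun S -> S}) : f i = j -> f j = i -> link i j (unlink i j f) = f.
Proof.
move=> fi fj; apply/ffunP => y; rewrite !ffunE.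
by case: (eqVneq y i) => [->|_] //; case: (eqVneq y j) => [->|_]; rewrite ?eqxx.
Qed.

Lemma unlink_link i j (g : {ffun S -> S}) : g i = i -> g j = j -> unlink i j (link i j g) = g.
Proof.
move=> gi gj; apply/ffunP => y; rewrite !ffunE.
by case: (eqVneq y i) => [->|_] //=; case: (eqVneq y j) => [->|_]; rewrite ?eqxx.
Qed.

End FinsetCounting.

Section Completions.
Variables (T : Type) (openO closeO openV closeV : pred T).

Definition allowed (x y : T) : bool := (openO x && closeO y) || (openV x && closeV y).

(* [completions X a b] counts the ways to pair off [X] when [a] left partners of the
   first kind and [b] of the second are still waiting for their right partner. *)
Fixpoint completions (X : seq T) (a b : nat) : nat :=
  if X is x :: X' then
    closeO x * a * completions X' a.-1 b + closeV x * b * completions X' a b.-1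
    + openO x * completions X' a.+1 b + openV x * completions X' a b.+1
  else ((a == 0) && (b == 0) : nat).

Lemma completions_nseq_closeO_openV (x : T) R k a b :
  closeO x -> openV x -> ~~ closeV x -> ~~ openO x ->
  completions (nseq k x ++ R) a b =
  \sum_(j < k.+1) 'C(k, j) * a ^_ j * completions R (a - j) (b + k - j).
Proof.
move=> cO oV /negbTE cV /negbTE oO.
elim: k a b => [|k IH] a b.
  by rewrite big_ord_recl big_ord0 /= !subn0 addn0 ffactn0 !mul1n addn0.
rewrite [LHS]/= cO oV cV oO !mul0n !mul1n !addn0 !IH [RHS]big_ord_recl bin0 ffactn0 !mul1n.
under [X in _ = _ + X]eq_bigr => i _ do rewrite lift0 binS !mulnDl.
rewrite big_split /= addnA [RHS]addnC big_distrr /=; congr (_ + _).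
  apply: eq_bigr => i _; rewrite ffactnS.
  have -> : a - i.+1 = a.-1 - i by lia.
  have -> : b + k.+1 - i.+1 = b + k - i by lia.
  by rewrite !mulnA (mulnC a) -!mulnA.
rewrite big_ord_recl bin0 ffactn0 !mul1n !subn0.
rewrite [X in _ = _ + X]big_ord_recr /= bin_small // !mul0n addn0.
have -> : b + k.+1 = b.+1 + k by lia.
by congr (_ + _); apply: eq_bigr => i _; rewrite lift0.
Qed.

End Completions.

Lemma completions_swap T (oO cO oV cV : pred T) X a b :
  completions oO cO oV cV X a b = completions oV cV oO cO X b a.
Proof.
elim: X a b => [|x X IH] a b /=; first by rewrite andbC.
by rewrite !IH [LHS]addnAC (addnC (cO x * a * _)).
Qed.

Lemma completions_nseq_openO_closeV T (oO cO oV cV : pred T) (x : T) R k a b :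
  oO x -> cV x -> ~~ oV x -> ~~ cO x ->
  completions oO cO oV cV (nseq k x ++ R) a b =
  \sum_(j < k.+1) 'C(k, j) * b ^_ j * completions oO cO oV cV R (a + k - j) (b - j).
Proof.
move=> oOx cVx oVx cOx; rewrite completions_swap completions_nseq_closeO_openV //.
by apply: eq_bigr => j _; rewrite completions_swap.
Qed.

Section PartialMatchings.
Variables (T : Type) (x0 : T) (Z : seq T) (openO closeO openV closeV : pred T).
Local Notation m := (size Z).
Local Notation lab i := (nth x0 Z i).
Local Notation allowed := (allowed openO closeO openV closeV).

Definition allowed_matching (f : {ffun 'I_m -> 'I_m}) : bool :=
  [forall y : 'I_m, (f (f y) == y) && (f y != y)]
  && [forall y : 'I_m, (y < f y) ==> allowed (lab y) (lab (f y))].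

(* [f] encodes a contraction at stage [t] of the scan: earlier positions whose pair is
   complete are erased (fixed points of [f]), [O] and [V] are the earlier positions still
   waiting for a right partner of the first resp. second kind, and every position from
   [t] on is paired. *)
Definition partial_at t (O V : {set 'I_m}) (f : {ffun 'I_m -> 'I_m}) (y : 'I_m) : bool :=
  [&& f (f y) == y, (f y == y) == ~~ [|| y \in O, y \in V | t <= y],
      (y \in O) ==> (t <= f y) && closeO (lab (f y)),
      (y \in V) ==> (t <= f y) && closeV (lab (f y)) &
      (t <= y < f y) ==> allowed (lab y) (lab (f y))].

Definition partial t O V f := [forall y, partial_at t O V f y].

Definition npartial t O V := #|[set f | partial t O V f]|.

Lemma card_allowed_matching_npartial : #|[set f | allowed_matching f]| = npartial 0 set0 set0.
Proof.
apply: eq_card => f; rewrite !inE /allowed_matching /partial.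
apply/andP/forallP => [[/forallP inv /forallP al] y | p].
  by move: (inv y) (al y); rewrite /partial_at !inE leq0n /= => /andP[-> /negbTE ->] ->.
by split; apply/forallP => y; move: (p y);
  rewrite /partial_at !inE leq0n /= => /and3P[fi /eqP fy al]; rewrite ?fi ?fy.
Qed.

Section PartialFacts.
Variables (t : nat) (O V : {set 'I_m}) (f : {ffun 'I_m -> 'I_m}) (y : 'I_m).
Hypothesis pf : partial t O V f.

Lemma partial_inv : f (f y) = y.
Proof. by move/forallP/(_ y)/and5P: pf => [/eqP]. Qed.

Lemma partial_fixE : (f y == y) = ~~ [|| y \in O, y \in V | t <= y].
Proof. by move/forallP/(_ y)/and5P: pf => [_ /eqP]. Qed.

Lemma partial_O : y \in O -> (t <= f y) && closeO (lab (f y)).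
Proof. by move/forallP/(_ y)/and5P: pf => [_ _ /implyP]. Qed.

Lemma partial_V : y \in V -> (t <= f y) && closeV (lab (f y)).
Proof. by move/forallP/(_ y)/and5P: pf => [_ _ _ /implyP]. Qed.

Lemma partial_allowed : t <= y -> y < f y -> allowed (lab y) (lab (f y)).
Proof. by move/forallP/(_ y)/and5P: pf => [_ _ _ _ /implyP al] ty yf; apply: al; rewrite ty. Qed.

End PartialFacts.

Lemma partial_at_eq t O V (f g : {ffun 'I_m -> 'I_m}) y :
  f y = g y -> f (g y) = g (g y) -> partial_at t O V f y = partial_at t O V g y.
Proof. by rewrite /partial_at => -> ->. Qed.

Section Step.
Variables (t : nat) (ht : t < m) (O V : {set 'I_m}).
Hypotheses (ltO : {in O, forall y : 'I_m, y < t}) (ltV : {in V, forall y : 'I_m, y < t}).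
Hypothesis disjOV : [disjoint O & V].
Let pt : 'I_m := Ordinal ht.

Let pt_notin (X : {set 'I_m}) : {in X, forall y : 'I_m, y < t} -> pt \notin X.
Proof. by move=> ltX; apply/negP => /ltX; rewrite ltnn. Qed.

Let ptO := pt_notin ltO.
Let ptV := pt_notin ltV.

Let lt_pt (y : 'I_m) : y != pt -> (t < y) = (t <= y).
Proof. by move=> ypt; rewrite ltn_neqAle eq_sym -[t]/(val pt) val_eqE ypt. Qed.

Lemma partial_at_shift (O' V' : {set 'I_m}) (f : {ffun 'I_m -> 'I_m}) y : y != pt -> f y != pt ->
  (y \in O') = (y \in O) -> (y \in V') = (y \in V) ->
  partial_at t O V f y = partial_at t.+1 O' V' f y.
Proof. by move=> ypt fypt eO eV; rewrite /partial_at eO eV !lt_pt. Qed.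

Lemma partial_unlink u (f : {ffun 'I_m -> 'I_m}) : u \in O -> partial t O V f -> f pt = u ->
  partial t.+1 (O :\ u) V (unlink pt u f).
Proof.
move=> uO pf fpt; have ut := ltO uO; have fu : f u = pt by rewrite -fpt (partial_inv _ pf).
apply/forallP => y; case: (eqVneq y pt) => [->|ypt].
  by rewrite /partial_at !unlink_l !inE (negbTE ptO) (negbTE ptV) ltnn andbF /= !eqxx.
case: (eqVneq y u) => [->|yu].
  by rewrite /partial_at !unlink_r !inE eqxx (disjointFr disjOV uO) ltnNge (ltnW ut) /= ?eqxx.
have fypt : f y != pt by apply: contraNneq yu => fy; rewrite -(partial_inv y pf) fy fpt.
have fyu : f y != u by apply: contraNneq ypt => fy; rewrite -(partial_inv y pf) fy fu.
rewrite (@partial_at_eq _ _ _ _ f) ?unlink_other //.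
by rewrite -partial_at_shift ?(forallP pf) //; rewrite !inE yu.
Qed.

Lemma partial_link u (g : {ffun 'I_m -> 'I_m}) :
  u \in O -> closeO (lab pt) -> partial t.+1 (O :\ u) V g ->
  partial t O V (link pt u g).
Proof.
move=> uO cpt pg; have ut := ltO uO; have upt : u != pt by rewrite -val_eqE /= neq_ltn ut.
have gpt : g pt = pt.
  by apply/eqP; rewrite (partial_fixE _ pg) !inE (negbTE ptO) (negbTE ptV) ltnn andbF.
have gu : g u = u.
  by apply/eqP; rewrite (partial_fixE _ pg) !inE eqxx (disjointFr disjOV uO) ltnNge (ltnW ut).
apply/forallP => y; case: (eqVneq y pt) => [->|ypt].
  rewrite /partial_at link_l link_r eqxx (negbTE upt) (negbTE ptO) (negbTE ptV) /=.
  by rewrite leqnn ltnNge (ltnW ut).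
case: (eqVneq y u) => [->|yu].
  rewrite /partial_at link_r link_l eqxx uO (disjointFr disjOV uO) /= (eq_sym pt u).
  by rewrite (negbTE upt) leqnn cpt (leqNgt t u) ut.
have gypt : g y != pt by apply: contraNneq ypt => gy; rewrite -(partial_inv y pg) gy gpt.
have gyu : g y != u by apply: contraNneq yu => gy; rewrite -(partial_inv y pg) gy gu.
rewrite (@partial_at_eq _ _ _ _ g) ?link_other //.
by rewrite (@partial_at_shift (O :\ u) V) ?(forallP pg) //; rewrite !inE yu.
Qed.

(* Removing the pair {pt, u} is a bijection onto the contractions at stage [t + 1]. *)
Lemma card_fiber_O u : u \in O ->
  #|[set f | partial t O V f & f pt == u]| = closeO (lab pt) * npartial t.+1 (O :\ u) V.
Proof.
move=> uO; have ut := ltO uO.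
case cpt: (closeO (lab pt)); last first.
  rewrite mul0n; apply/eqP; rewrite cards_eq0; apply/eqP/setP => f; rewrite !inE.
  apply/negbTE/andP => -[pf /eqP fpt].
  by have := partial_O pf uO; rewrite -fpt (partial_inv pt pf) cpt andbF.
rewrite mul1n; apply: (@card_in_bij _ _ _ _ (unlink pt u) (link pt u)) => [f|g]; rewrite !inE.
  case/andP => pf /eqP fpt; split; first exact: partial_unlink.
  by apply: link_unlink => //; rewrite -fpt (partial_inv pt pf).
move=> pg; split; first by rewrite link_l eqxx andbT partial_link.
apply: unlink_link; apply/eqP; rewrite (partial_fixE _ pg) !inE ?eqxx ?(negbTE ptO) ?(negbTE ptV).
  by rewrite ltnn andbF.
by rewrite (disjointFr disjOV uO) ltnNge (ltnW ut).
Qed.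

Lemma card_fiber_closed u : u \notin O -> u \notin V -> u <= t ->
  #|[set f | partial t O V f & f pt == u]| = 0.
Proof.
move=> uO uV ut; apply/eqP; rewrite cards_eq0; apply/eqP/setP => f; rewrite !inE.
apply/negbTE/andP => -[pf /eqP fpt].
have fu : f u = pt by rewrite -fpt (partial_inv pt pf).
have upt : u != pt.
  by rewrite -fpt (partial_fixE pt pf) (negbTE ptO) (negbTE ptV) /= leqnn.
have ult : u < t by rewrite ltn_neqAle ut andbT; move: upt; rewrite -val_eqE.
move: (partial_fixE u pf); rewrite fu (negbTE uO) (negbTE uV) leqNgt ult.
by rewrite eq_sym (negbTE upt).
Qed.

Lemma partial_at_open (f : {ffun 'I_m -> 'I_m}) y :
  f (f pt) = pt -> t < f pt -> closeO (lab (f pt)) -> openO (lab pt) ->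
  partial_at t O V f y = partial_at t.+1 (pt |: O) V f y.
Proof.
move=> fpt_inv tf cf oO; have fptpt : f pt != pt by rewrite -val_eqE /= neq_ltn tf orbT.
case: (eqVneq y pt) => [->|ypt].
  rewrite /partial_at fpt_inv eqxx (negbTE fptpt) !inE eqxx (negbTE ptO) (negbTE ptV) /=.
  rewrite leqnn ltnn tf cf /allowed (oO : openO (lab t)).
  by rewrite /= cf.
case: (eqVneq (f y) pt) => [fy|fypt]; last by apply: partial_at_shift; rewrite // !inE (negbTE ypt).
rewrite /partial_at fy; case: (eqVneq (f pt) y) => [fpty|]; last by [].
have ty : t < y by rewrite -fpty.
have yO : y \notin O by apply/negP => /ltO; rewrite ltnNge (ltnW ty).
have yV : y \notin V by apply/negP => /ltV; rewrite ltnNge (ltnW ty).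
have yptO : (y \in pt |: O) = false by rewrite !inE (negbTE ypt) (negbTE yO).
by rewrite yptO (negbTE yO) (negbTE yV) (eq_sym pt y) (negbTE ypt) (ltnW ty) ty /= ltnNge (ltnW ty).
Qed.

Lemma card_open_O : openO (lab pt) -> ~~ openV (lab pt) ->
  #|[set f | partial t O V f & t < f pt]| = npartial t.+1 (pt |: O) V.
Proof.
move=> oO oV; apply: eq_card => f; rewrite !inE; apply/andP/idP => [[pf tf] | pf].
  have cf : closeO (lab (f pt)).
    by move: (partial_allowed (y := pt) pf (leqnn t) tf); rewrite /allowed oO (negbTE oV) orbF.
  by apply/forallP => y; rewrite -partial_at_open ?(partial_inv pt pf) ?(forallP pf).
have /andP[tf cf] := partial_O pf (setU11 pt O).
by split=> //; apply/forallP => y; rewrite partial_at_open ?(partial_inv pt pf) ?(forallP pf).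
Qed.

Lemma card_not_open : ~~ openO (lab pt) -> ~~ openV (lab pt) ->
  #|[set f | partial t O V f & t < f pt]| = 0.
Proof.
move=> oO oV; apply/eqP; rewrite cards_eq0; apply/eqP/setP => f; rewrite !inE.
apply/negbTE/andP => -[pf tf].
by have := partial_allowed (y := pt) pf (leqnn t) tf; rewrite /allowed (negbTE oO) (negbTE oV).
Qed.

End Step.
End PartialMatchings.

Lemma partial_swap T (x0 : T) Z (oO cO oV cV : pred T) t O V f :
  @partial T x0 Z oO cO oV cV t O V f = partial x0 oV cV oO cO t V O f.
Proof.
apply: eq_forallb => y; rewrite /partial_at /allowed orbCA [_ && cO _ || _]orbC.
by congr [&& _, _ & _]; apply: andbCA.
Qed.

Lemma npartial_swap T (x0 : T) Z (oO cO oV cV : pred T) t O V :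
  @npartial T x0 Z oO cO oV cV t O V = npartial x0 oV cV oO cO t V O.
Proof. by apply: eq_card => f; rewrite !inE partial_swap. Qed.

Section Recursion.
Variables (T : Type) (x0 : T) (Z : seq T) (openO closeO openV closeV : pred T).
Hypothesis open_excl : forall x, ~~ (openO x && openV x).
Local Notation m := (size Z).
Local Notation lab i := (nth x0 Z i).
Local Notation partial := (partial x0 openO closeO openV closeV).
Local Notation npartial := (npartial x0 openO closeO openV closeV).
Local Notation completions := (completions openO closeO openV closeV).

Section Scan.
Variables (t : nat) (ht : t < m) (O V : {set 'I_m}).
Hypotheses (ltO : {in O, forall y : 'I_m, y < t}) (ltV : {in V, forall y : 'I_m, y < t}).
Hypothesis disjOV : [disjoint O & V].
Let pt : 'I_m := Ordinal ht.

Lemma card_fiber_V u : u \in V ->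
  #|[set f | partial t O V f & f pt == u]| = closeV (lab t) * npartial t.+1 O (V :\ u).
Proof.
move=> uV; rewrite npartial_swap -(card_fiber_O x0 openV closeV openO closeO ht ltV ltO _ uV).
  by apply: eq_card => f; rewrite !inE partial_swap.
by rewrite disjoint_sym.
Qed.

Lemma card_open : #|[set f | partial t O V f & t < f pt]| =
  openO (lab t) * npartial t.+1 (pt |: O) V + openV (lab t) * npartial t.+1 O (pt |: V).
Proof.
case oO: (openO (lab t)).
  have oV : openV (lab t) = false by move: (open_excl (lab t)); rewrite oO => /negbTE.
  by rewrite oV (card_open_O _ _ ltO ltV) ?oO ?oV // mul1n mul0n addn0.
case oV: (openV (lab t)).
  rewrite mul0n mul1n npartial_swap -(card_open_O _ _ ltV ltO) ?oO ?oV //.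
  by apply: eq_card => f; rewrite !inE partial_swap.
by rewrite card_not_open ?oO ?oV.
Qed.

Lemma npartial_step :
  npartial t O V =
    \sum_(u in O) closeO (lab t) * npartial t.+1 (O :\ u) V
  + \sum_(u in V) closeV (lab t) * npartial t.+1 O (V :\ u)
  + (openO (lab t) * npartial t.+1 (pt |: O) V + openV (lab t) * npartial t.+1 O (pt |: V)).
Proof.
have -> : npartial t O V = #|[set f | partial t O V f & predT (f pt)]|.
  by apply: eq_card => f; rewrite !inE andbT.
rewrite card_fibers (bigID (mem O)) /= [X in _ + X](bigID (mem V)) /=.
rewrite [X in _ + (_ + X)](bigID (fun u : 'I_m => t < u)) /= [X in _ + (_ + (_ + X))]big1.
  rewrite addn0 -card_open.
  rewrite (card_fibers _ (fun f : {ffun 'I_m -> 'I_m} => f pt) (fun u : 'I_m => t < u)).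
  rewrite addnA.
  congr (_ + _ + _).
  - apply: eq_big => [u|u uO] //; exact: (card_fiber_O x0 _ _ _ _ ht ltO ltV disjOV).
  - apply: eq_big => [u|u /andP[_ uV]]; last exact: card_fiber_V.
    by rewrite /=; case uV: (u \in V); rewrite ?andbT ?andbF // (disjointFl disjOV uV).
  - apply: eq_bigl => u /=; case tu: (t < u); rewrite ?andbT ?andbF //.
    by apply/andP; split; apply/negP; [move/ltO | move/ltV] => ut;
      move: tu; rewrite ltnNge (ltnW ut).
move=> u /andP[/andP[uO uV] tu].
by apply: (card_fiber_closed x0 _ _ _ _ ht ltO ltV) => //; rewrite leqNgt.
Qed.

Lemma npartial_step_completions :
  (forall O' V' : {set 'I_m}, {in O', forall y : 'I_m, y < t.+1} ->
     {in V', forall y : 'I_m, y < t.+1} -> [disjoint O' & V'] ->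
     npartial t.+1 O' V' = completions (drop t.+1 Z) #|O'| #|V'|) ->
  npartial t O V = completions (drop t Z) #|O| #|V|.
Proof.
move=> IH; have ptO : pt \notin O by apply/negP => /ltO; rewrite ltnn.
have ptV : pt \notin V by apply/negP => /ltV; rewrite ltnn.
have ltS (X : {set 'I_m}) : {in X, forall y : 'I_m, y < t} -> {in X, forall y : 'I_m, y < t.+1}.
  by move=> ltX y /ltX /ltnW.
have ltSD1 (X : {set 'I_m}) u :
    {in X, forall y : 'I_m, y < t} -> {in X :\ u, forall y : 'I_m, y < t.+1}.
  by move=> ltX y /setD1P[_ /ltX /ltnW].
have ltSU1 (X : {set 'I_m}) :
    {in X, forall y : 'I_m, y < t} -> {in pt |: X, forall y : 'I_m, y < t.+1}.
  by move=> ltX y /setU1P[-> // | /ltX /ltnW].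
rewrite npartial_step (drop_nth x0 ht) /=.
rewrite (eq_bigr (fun _ => closeO (lab t) * completions (drop t.+1 Z) #|O|.-1 #|V|)); last first.
  move=> u uO; rewrite IH; [by rewrite (cardsD1 u O) uO | exact: ltSD1 | exact: ltS |].
  by apply: disjointWl disjOV; apply: subD1set.
rewrite [\sum_(u in V) _]
  (eq_bigr (fun _ => closeV (lab t) * completions (drop t.+1 Z) #|O| #|V|.-1)); last first.
  move=> u uV; rewrite IH; [by rewrite (cardsD1 u V) uV | exact: ltS | exact: ltSD1 |].
  by apply: disjointWr disjOV; apply: subD1set.
have disjU1O : [disjoint pt |: O & V].
  by rewrite disjoints_subset subUset sub1set inE ptV -disjoints_subset disjOV.
have disjU1V : [disjoint O & pt |: V].
  by rewrite disjoint_sym disjoints_subset subUset sub1set inE ptO -disjoints_subset disjoint_sym.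
rewrite !sum_nat_const (IH _ _ (ltSU1 _ ltO) (ltS _ ltV) disjU1O).
rewrite (IH _ _ (ltS _ ltO) (ltSU1 _ ltV) disjU1V) !cardsU1 ptO ptV !add1n.
by rewrite !mulnA (mulnC #|O|) (mulnC #|V|) addnA.
Qed.

End Scan.

Lemma npartial_end (O V : {set 'I_m}) : npartial m O V = (#|O| == 0) && (#|V| == 0).
Proof.
case: (set_0Vmem (O :|: V)) => [/eqP | [y yOV]]; last first.
  have -> : (#|O| == 0) && (#|V| == 0) = false.
    by rewrite !cards_eq0; case/setUP: yOV => [yO|yV]; [case: eqP yO | rewrite andbC; case: eqP yV];
      rewrite // => ->; rewrite inE.
  apply/eqP; rewrite cards_eq0; apply/eqP/setP => f; rewrite !inE; apply/negbTE/negP => pf.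
  have : m <= f y by case/setUP: yOV => [/(partial_O pf) | /(partial_V pf)] /andP[].
  by rewrite leqNgt ltn_ord.
rewrite setU_eq0 => /andP[/eqP-> /eqP->].
rewrite cards0 /npartial (_ : [set f | partial m set0 set0 f] = [set [ffun y => y]]) ?cards1 //.
apply/setP => f; rewrite !inE; apply/idP/eqP => [pf|->].
  by apply/ffunP => y; rewrite ffunE; apply/eqP; rewrite (partial_fixE y pf) !inE leqNgt ltn_ord.
by apply/forallP => y; rewrite /partial_at !ffunE !inE !eqxx leqNgt ltn_ord.
Qed.

Lemma npartial_completions t (O V : {set 'I_m}) : t <= m ->
  {in O, forall y : 'I_m, y < t} -> {in V, forall y : 'I_m, y < t} -> [disjoint O & V] ->
  npartial t O V = completions (drop t Z) #|O| #|V|.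
Proof.
move Hk : (m - t) => k; elim: k t Hk O V => [|k IH] t Hk O V tm ltO ltV disjOV.
  have -> : t = m by lia.
  by rewrite drop_size npartial_end.
have ht : t < m by lia.
by apply: (npartial_step_completions ht ltO ltV disjOV) => O' V'; apply: IH; lia.
Qed.

Theorem card_allowed_matching_completions :
  #|[set f | @allowed_matching T x0 Z openO closeO openV closeV f]| = completions Z 0 0.
Proof.
rewrite card_allowed_matching_npartial npartial_completions ?cards0 ?drop0 //.
- by move=> y; rewrite inE.
- by move=> y; rewrite inE.
- by rewrite disjoints_subset sub0set.
Qed.

End Recursion.

(* Partners of the two nonvanishing kinds of contractions, <a^+_r a_s> on occupied
   and <a_s a^+_r> on virtual spin-orbitals. *)
Definition occ_left (x : elop) : bool := is_cre x && ~~ opclass_eqb (ocls x) VirtOp.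
Definition occ_right (x : elop) : bool := ~~ is_cre x && ~~ opclass_eqb (ocls x) VirtOp.
Definition virt_left (x : elop) : bool := ~~ is_cre x && ~~ opclass_eqb (ocls x) OccOp.
Definition virt_right (x : elop) : bool := is_cre x && ~~ opclass_eqb (ocls x) OccOp.

Definition wcount : seq elop -> nat -> nat -> nat :=
  completions occ_left occ_right virt_left virt_right.

Lemma good_pairE x y : good_pair x y = allowed occ_left occ_right virt_left virt_right x y.
Proof. by case: x => [[] []]; case: y => [[] []]. Qed.

Lemma W_wcount X : W X = wcount X 0 0.
Proof.
rewrite /wcount -(card_allowed_matching_completions (Elop true ArbOp)); last by case=> [[] []].
apply: eq_card => f; rewrite !inE /well_matching /allowed_matching; congr (_ && _).
by apply: eq_forallb => y; rewrite good_pairE.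
Qed.

Lemma wcount_nseq_ann R k a b :
  wcount (nseq k (Elop false ArbOp) ++ R) a b =
  \sum_(j < k.+1) 'C(k, j) * a ^_ j * wcount R (a - j) (b + k - j).
Proof. exact: completions_nseq_closeO_openV. Qed.

Lemma wcount_nseq_cre R k a b :
  wcount (nseq k (Elop true ArbOp) ++ R) a b =
  \sum_(j < k.+1) 'C(k, j) * b ^_ j * wcount R (a + k - j) (b - j).
Proof. exact: completions_nseq_openO_closeV. Qed.

(* Weight of an expanded chain with word [s] entered with [d] open contractions of
   each kind. *)
Fixpoint chain_weight (s : seq bool) (d : nat) : nat :=
  if s is b :: s' then (if b then chain_weight s' d.+1 else d * d * chain_weight s' d.-1)
  else 1.

Definition end_depth (s : seq bool) (d : nat) : nat := d + count id s - count negb s.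

Lemma chain_weight_prefix s d k :
  chain_weight s d != 0 -> count negb (take k s) <= d + count id (take k s).
Proof.
elim: s d k => [|[] s IH] d [|k] //= w.
  by have := IH _ k w; rewrite add0n; lia.
case: d w => [|d] //=; rewrite !muln_eq0 negb_or => /andP[_ /(IH _ k)].
by rewrite add0n; lia.
Qed.

Lemma chain_weight_balance s d :
  chain_weight s d != 0 -> d + count id s = end_depth s d + count negb s.
Proof. by move=> /(chain_weight_prefix (size s)); rewrite take_size /end_depth => ?; lia. Qed.

Lemma dyck_chain_weight s : chain_weight s 0 != 0 -> end_depth s 0 = 0 -> dyck s.
Proof.
move=> w e0; have := chain_weight_balance w; rewrite e0 add0n => bal.
apply/andP; split; last by rewrite bal.
by apply/forallP => k; have := chain_weight_prefix k w; rewrite add0n.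
Qed.

Section Chains.
Variables L Nocc : nat.

Lemma expand_chain_cat C1 C2 :
  expand_chain Nocc (C1 ++ C2) = expand_chain Nocc C1 ++ expand_chain Nocc C2.
Proof. by rewrite /expand_chain map_cat flatten_cat. Qed.

Lemma wcount_chain_cat C R d : all (xop_valid L Nocc) C ->
  wcount (expand_chain Nocc C ++ R) d d =
  chain_weight (word_of C) d * wcount R (end_depth (word_of C) d) (end_depth (word_of C) d).
Proof.
elim: C d => [|[[e i] a] C IH] d /=; first by rewrite mul1n /end_depth addn0 subn0.
case/andP => /and4P [_ /= iN /= Na _] vC.
rewrite /expand_chain /= -/(expand_chain _ _) /orb_class iN leqNgt Na -catA.
case: e => /=; rewrite !mul0n !mul1n ?add0n ?addn0 IH //.
  by case: d => [|d]; rewrite ?mul0n // /end_depth /= !mulnA; congr (_ * wcount R _ _); lia.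
by rewrite /end_depth /=; congr (_ * wcount R _ _); lia.
Qed.

Lemma wcount_chain_offdiag C a b : all (xop_valid L Nocc) C -> a != b ->
  wcount (expand_chain Nocc C) a b = 0.
Proof.
elim: C a b => [|[[e i] a'] C IH] a b /=; first by case: a => [|a]; case: b.
case/andP => /and4P [_ /= iN /= Na _] vC ab.
rewrite /expand_chain /= -/(expand_chain _ _) /orb_class iN leqNgt Na.
case: e => /=; rewrite !mul0n !mul1n ?add0n ?addn0; last by rewrite IH.
by case: a ab => [|a]; case: b => [|b] //= ab; rewrite ?muln0 ?mul0n // IH ?muln0.
Qed.

Lemma wcount_chain C a b : all (xop_valid L Nocc) C ->
  wcount (expand_chain Nocc C) a b =
  (a == b) * chain_weight (word_of C) a * (end_depth (word_of C) a == 0).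
Proof.
move=> vC; case: (eqVneq a b) => [<-|ab]; last by rewrite wcount_chain_offdiag.
by rewrite -[expand_chain _ _]cats0 wcount_chain_cat //= andbb mul1n.
Qed.

Lemma wcount_chain_support C2 s1 x y : all (xop_valid L Nocc) C2 ->
  chain_weight s1 0 != 0 -> count id (s1 ++ word_of C2) = count negb (s1 ++ word_of C2) ->
  let e := end_depth s1 0 in
  wcount (expand_chain Nocc C2) x y = (x == e) * (y == e) * wcount (expand_chain Nocc C2) e e.
Proof.
move=> valid2 w1 balanced e; rewrite !wcount_chain // eqxx mul1n.
case: (eqVneq x y) => [<-|xy]; last first.
  rewrite mul0n; case: (eqVneq x e) => [xe|]; last by rewrite !mul0n.
  by case: (eqVneq y e) => [ye|]; [move: xy; rewrite xe ye eqxx | rewrite muln0 mul0n].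
rewrite mul1n; case: (eqVneq x e) => [->|xe]; first by rewrite mul1n.
rewrite !mul0n; apply/eqP; rewrite muln_eq0 eqb0; apply/negPn/negP => /norP[w2 /negPn/eqP e2].
have := chain_weight_balance w1; have := chain_weight_balance w2.
by move: xe balanced; rewrite e2 !count_cat /e; lia.
Qed.

End Chains.

Lemma ffactnD n a b : n ^_ (a + b) = n ^_ a * (n - a) ^_ b.
Proof.
elim: a n => [|a IH] n; first by rewrite add0n ffactn0 mul1n subn0.
by rewrite addSn !ffactnS IH mulnA; congr (_ * _ ^_ _); lia.
Qed.

Lemma ffact_mul_binomial N e l : l <= N ->
  e ^_ l * (e + N - l) ^_ (N - l) = N`! * 'C(e + N - l, N).
Proof.
move=> lN; case: (leqP l e) => le; last first.
  by rewrite ffact_small // bin_small ?mul0n ?muln0 //; lia.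
rewrite mulnC; transitivity ((e + N - l) ^_ (N - l + l)).
  by rewrite ffactnD; congr (_ * _ ^_ _); lia.
by rewrite (subnK lN) -bin_ffact mulnC.
Qed.

Lemma McoefE N e : Mcoef N e = \sum_(l < N.+1) 'C(N, l) ^ 2 * 'C(e + N - l, N).
Proof.
have hM : (minn N e).+1 <= N.+1 by rewrite ltnS geq_minl.
rewrite /Mcoef (big_ord_widen _ (fun l => 'C(N, l) ^ 2 * 'C(e + N - l, N)) hM).
rewrite [RHS](bigID (fun l : 'I_N.+1 => l < (minn N e).+1)) /= [X in _ = _ + X]big1 ?addn0 //.
move=> l; rewrite -leqNgt => hl.
by rewrite (@bin_small (e + N - l) N) ?muln0 //; move: (ltn_ord l); lia.
Qed.

(* Only [j = N - l] brings the open contractions back to [(e, e)]. *)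
Lemma insertion_inner_sum N e l c : l <= N ->
  e ^_ l * \sum_(j < N.+1) 'C(N, j) * (e + N - l) ^_ j *
              ((e + N - l - j == e) * (e - l + N - j == e) * c)
  = 'C(N, l) * (N`! * 'C(e + N - l, N)) * c.
Proof.
move=> lN; case: (leqP l e) => le; last first.
  by rewrite ffact_small // mul0n (@bin_small (e + N - l) N) ?muln0 ?mul0n //; lia.
have jN : N - l < N.+1 by rewrite ltnS leq_subr.
rewrite (bigD1 (Ordinal jN)) //= big1 ?addn0; last first.
  move=> j; rewrite -val_eqE /= => jNl.
  case: (leqP j (e + N - l)) => hj; last by rewrite ffact_small // muln0 mul0n.
  have -> : (e + N - l - j == e) = false by apply/eqP; move/eqP: jNl; lia.
  by rewrite /= !mul0n muln0.
have -> : e + N - l - (N - l) = e by lia.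
have -> : e - l + N - (N - l) = e by lia.
by rewrite eqxx !mul1n bin_sub // -ffact_mul_binomial // !mulnA (mulnC (e ^_ l)).
Qed.

Lemma insertion_sum N e c (G : nat -> nat -> nat) :
  (forall x y, G x y = (x == e) * (y == e) * c) ->
  \sum_(l < N.+1) 'C(N, l) * e ^_ l *
     \sum_(j < N.+1) 'C(N, j) * (e + N - l) ^_ j * G (e + N - l - j) (e - l + N - j)
  = N`! * Mcoef N e * c.
Proof.
move=> Gsupp; transitivity (\sum_(l < N.+1) N`! * ('C(N, l) ^ 2 * 'C(e + N - l, N)) * c).
  apply: eq_bigr => l _; under eq_bigr => j _ do rewrite Gsupp.
  rewrite -mulnA (@insertion_inner_sum N e l c); last by rewrite -ltnS.
  by rewrite !mulnA [_ * N`!]mulnC !mulnA.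
by rewrite -big_distrl -big_distrr McoefE.
Qed.

Lemma word_of_balanced (C : seq xop) n :
  size C = (2 * n)%N -> count (fun x : xop => x.1.1) C = n ->
  count id (word_of C) = count negb (word_of C).
Proof.
move=> sC cC; rewrite !count_map.
have -> : count (preim (fun x : xop => ~~ x.1.1) negb) C = n.
  by rewrite -cC; apply: eq_count => x /=; rewrite negbK.
have -> : count (preim (fun x : xop => ~~ x.1.1) id) C = count (predC (fun x : xop => x.1.1)) C.
  exact: eq_count.
by have := count_predC (fun x : xop => x.1.1) C; rewrite cC sC; lia.
Qed.

Section Insertion.
Variables (L Nocc : nat) (C : seq xop).
Hypothesis validC : all (xop_valid L Nocc) C.
Hypothesis balancedC : count id (word_of C) = count negb (word_of C).

Lemma W_insert_chain N K :
  W (insert_chain Nocc C N K) = N`! * Mcoef N (depth (word_of C) K) * W (expand_chain Nocc C).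
Proof.
set s1 := word_of (take K C); set e := end_depth s1 0.
set R := expand_chain Nocc (drop K C).
have /andP[valid1 valid2] : all (xop_valid L Nocc) (take K C) && all (xop_valid L Nocc) (drop K C).
  by rewrite -all_cat cat_take_drop.
have -> : depth (word_of C) K = e by rewrite /depth -map_take /e /end_depth add0n.
have -> : W (expand_chain Nocc C) = chain_weight s1 0 * wcount R e e.
  by rewrite W_wcount -{1}(cat_take_drop K C) expand_chain_cat (wcount_chain_cat _ _ valid1).
rewrite W_wcount /insert_chain (wcount_chain_cat _ _ valid1) -/s1 -/e -/R wcount_nseq_cre.
under eq_bigr => l _ do rewrite wcount_nseq_ann.
have [->|w1] := eqVneq (chain_weight s1 0) 0; first by rewrite !mul0n muln0.
rewrite (@insertion_sum N e (wcount R e e) (wcount R)); first by rewrite mulnCA.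
move=> x y; apply: wcount_chain_support valid2 w1 _.
by rewrite /s1 -map_cat cat_take_drop.
Qed.

Lemma W_expand_chain_eq0 : ~~ dyck (word_of C) -> W (expand_chain Nocc C) = 0.
Proof.
move=> notdyck; rewrite W_wcount (wcount_chain 0 0 validC) eqxx mul1n.
apply/eqP; apply: contraNT notdyck; rewrite muln_eq0 negb_or eqb0 negbK => /andP[w /eqP e0].
exact: dyck_chain_weight.
Qed.

End Insertion.

Theorem mainTheorem5 (L Nocc : nat) (C : seq xop) (n N K : nat) :
  1 <= Nocc -> Nocc < L ->
  all (xop_valid L Nocc) C ->
  size C = (2 * n)%N ->
  count (fun x : xop => x.1.1) C = n ->
  1 <= N -> K <= size C ->
  (~~ dyck (word_of C) -> W (insert_chain Nocc C N K) = 0%N) /\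
  (dyck (word_of C) ->
     W (insert_chain Nocc C N K)
     = (N`! * Mcoef N (depth (word_of C) K) * W (expand_chain Nocc C))%N).
Proof.
move=> _ _ validC sizeC countC _ _.
have balancedC := word_of_balanced sizeC countC.
rewrite (W_insert_chain validC balancedC N K); split=> // notdyck.
by rewrite (W_expand_chain_eq0 validC notdyck) muln0.
Qed.
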